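(* Consider a classical broadcast channel with finite input alphabet $\mathcal{X}$, finite output alphabets $\mathcal{Y},\mathcal{Z}$ and transition probabilities $p(y,z\mid x)$. Let $(U,V)$ be random variables with joint distribution $p_{UV}$ on finite sets $\mathcal{U}\times\mathcal{V}$, let $f:\mathcal{U}\times\mathcal{V}\to\mathcal{X}$, and let $(Y,Z)$ be random variables with $\Pr\{(Y,Z)=(y,z)\mid U=u,V=v\}=p(y,z\mid f(u,v))$. Let $\varepsilon_0\in[0,1)$, $\varepsilon_\infty\in[0,\tfrac14]$, $\tilde\varepsilon\in(0,1)$ and $\varepsilon>0$ satisfy $37\tilde\varepsilon+8\varepsilon_0\le\varepsilon$, and let $R_1,R_2\ge0$ (with $2^{R_1},2^{R_2}$ integers) satisfy $$R_1\le I_0^{\varepsilon_0}[U;Y]-5\log\tfrac1{\tilde\varepsilon}-2,\qquad R_2\le I_0^{\varepsilon_0}[V;Z]-5\log\tfrac1{\tilde\varepsilon}-2,$$ $$R_1+R_2\le I_0^{\varepsilon_0}[U;Y]+I_0^{\varepsilon_0}[V;Z]-I_\infty^{\varepsilon_\infty}[U;V]-11\log\tfrac1{\tilde\varepsilon}-5.$$ Then there is a one-shot $(R_1,R_2,\varepsilon)$-code for this classical broadcast channel.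
   Context: All logarithms are base 2; $[N]=\{1,\dots,N\}$. For random variables $(U,V)\sim p_{UV}$ on finite $\mathcal{U}\times\mathcal{V}$ with marginals $p_U,p_V$ and $\varepsilon\in[0,1)$: the smooth classical min Rényi divergence is $I_0^{\varepsilon}[U;V]=\sup_{\mathcal{A}\subseteq\mathcal{U}\times\mathcal{V},\ p_{UV}(\mathcal{A})\ge1-\varepsilon}\ -\log\sum_{(u,v)\in\mathcal{A}}p_U(u)p_V(v)$, and the smooth max Rényi divergence is $I_\infty^{\varepsilon}[U;V]=\inf_{\mathcal{G}\subseteq\mathcal{U}\times\mathcal{V},\ p_{UV}(\mathcal{G})>1-\varepsilon}\ \sup_{(u,v)\in\mathcal{G}}\log\frac{p_{UV}(u,v)}{p_U(u)p_V(v)}$ (the same definitions apply to pairs $(U,Y)$, $(V,Z)$). An $(R_1,R_2,\varepsilon)$-code for the classical broadcast channel $p_{YZ\mid X}$ consists of an encoding function $F:[2^{R_1}]\times[2^{R_2}]\to\mathcal{X}$ and decoding functions $D_1:\mathcal{Y}\to[2^{R_1}]$, $D_2:\mathcal{Z}\to[2^{R_2}]$ such that $\Pr\{(M_1,M_2)\ne(D_1(Y'),D_2(Z'))\}\le\varepsilon$, where $(M_1,M_2)$ is uniform on $[2^{R_1}]\times[2^{R_2}]$ and $\Pr\{(Y',Z')=(y,z)\mid M_1=m_1,M_2=m_2\}=p(y,z\mid F(m_1,m_2))$. *)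

From HB Require Import structures.
From mathcomp Require Import all_boot.
From Stdlib Require Import Reals.
Set Implicit Arguments. Unset Strict Implicit. Unset Printing Implicit Defensive.
Local Open Scope R_scope.

Lemma Rplus_assoc' : associative Rplus.
Proof. by move=> x y z; rewrite Rplus_assoc. Qed.
HB.instance Definition _ := Monoid.isComLaw.Build R 0 Rplus Rplus_assoc' Rplus_comm Rplus_0_l.

Notation "\rsum_ ( i 'in' A ) F" := (\big[Rplus/0]_(i in A) F)
  (at level 41, F at level 41, i, A at level 50).
Notation "\rsum_ ( i : T ) F" := (\big[Rplus/0]_(i : T) F)
  (at level 41, F at level 41, i at level 50).

Definition log2 (x : R) : R := ln x / ln 2.

Definition is_lower_bound (E : R -> Prop) (m : R) : Prop := forall x, E x -> m <= x.
Definition is_glb (E : R -> Prop) (m : R) : Prop :=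
  is_lower_bound E m /\ (forall b, is_lower_bound E b -> b <= m).

Definition is_distr (T : finType) (p : T -> R) : Prop :=
  (forall t, 0 <= p t) /\ \rsum_(t : T) p t = 1.

Section Info.
Variables (A B : finType) (P : A -> B -> R).

Definition margA (a : A) : R := \rsum_(b : B) P a b.
Definition margB (b : B) : R := \rsum_(a : A) P a b.

Definition massP (S : {set A * B}) : R := \rsum_(x in S) P x.1 x.2.
Definition massProd (S : {set A * B}) : R := \rsum_(x in S) (margA x.1 * margB x.2).

Definition I0_candidates (eps : R) (r : R) : Prop :=
  exists S : {set A * B}, 1 - eps <= massP S /\ r = - log2 (massProd S).

(* I0 eps r  <->  r = I_0^eps[A;B] (smooth min Renyi divergence) *)
Definition I0 (eps r : R) : Prop := is_lub (I0_candidates eps) r.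

(* sup_{x in G} log (P x / (P_A P_B) x); points with P x = 0 contribute
   log 0 = -infinity and hence are omitted from the supremum *)
Definition Imax_on (G : {set A * B}) (r : R) : Prop :=
  is_lub (fun t => exists x, x \in G /\ 0 < P x.1 x.2 /\
                    t = log2 (P x.1 x.2 / (margA x.1 * margB x.2))) r.

Definition Iinf_candidates (eps : R) (r : R) : Prop :=
  exists G : {set A * B}, 1 - eps < massP G /\ Imax_on G r.

(* Iinf eps r  <->  r = I_infty^eps[A;B] (smooth max Renyi divergence) *)
Definition Iinf (eps r : R) : Prop := is_glb (Iinf_candidates eps) r.
End Info.

(* Broadcast channel W y z x = p(y,z|x) *)
Definition is_bc_channel (X Y Z : finType) (W : Y -> Z -> X -> R) : Prop :=
  (forall y z x, 0 <= W y z x) /\ (forall x, \rsum_(yz : Y * Z) W yz.1 yz.2 x = 1).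

Definition joint_UY (U V X Y Z : finType) (pUV : U -> V -> R) (f : U -> V -> X)
  (W : Y -> Z -> X -> R) (u : U) (y : Y) : R :=
  \rsum_(v : V) (pUV u v * \rsum_(z : Z) W y z (f u v)).
Definition joint_VZ (U V X Y Z : finType) (pUV : U -> V -> R) (f : U -> V -> X)
  (W : Y -> Z -> X -> R) (v : V) (z : Z) : R :=
  \rsum_(u : U) (pUV u v * \rsum_(y : Y) W y z (f u v)).

(* An (R1,R2,eps)-code with M1 = 2^R1, M2 = 2^R2 messages: average error
   probability for uniformly distributed messages is at most eps. *)
Definition error_prob (X Y Z : finType) (W : Y -> Z -> X -> R) (M1 M2 : nat)
  (F : 'I_M1 -> 'I_M2 -> X) (D1 : Y -> 'I_M1) (D2 : Z -> 'I_M2) : R :=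
  / (INR M1 * INR M2) *
  \rsum_(m : 'I_M1 * 'I_M2)
    \rsum_(yz : Y * Z)
      (if (D1 yz.1 == m.1) && (D2 yz.2 == m.2) then 0 else W yz.1 yz.2 (F m.1 m.2)).

Definition is_code (X Y Z : finType) (W : Y -> Z -> X -> R) (M1 M2 : nat) (eps : R) : Prop :=
  exists (F : 'I_M1 -> 'I_M2 -> X) (D1 : Y -> 'I_M1) (D2 : Z -> 'I_M2),
    error_prob W F D1 D2 <= eps.

(* Random coding with marking, a one-shot version of Marton's scheme.  Draw
   codebooks with i.i.d. entries from p_U and p_V, giving each message L1
   (resp. L2) codewords; each receiver outputs a message whose list contains a
   codeword jointly in the near-optimal set of I_0 with its output.  Every
   message pair is sent through the list pair of least conditional error, which
   is at most the average of the conditional errors weighted by the density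
   ratio p_UV / (p_U p_V) truncated to the near-optimal set of I_oo, plus the
   defect of the total weight from 1.  Under the product of the marginals the
   weighted error is an error under the true joint law, bounded by the packing
   terms 1 - p(S) + M L (p_U x p_Y)(S); the defect is bounded through its second
   moment, whose worst term 2^I_oo / (L1 L2) is where the sum-rate constraint
   enters. *)

From HB Require Import structures.
From mathcomp Require Import all_boot.
From Stdlib Require Import Reals Lra Classical ZArith Lia.
Local Open Scope R_scope.
Set Implicit Arguments. Unset Strict Implicit. Unset Printing Implicit Defensive.

Lemma Rmult_assoc' : associative Rmult.
Proof. by move=> x y z; rewrite Rmult_assoc. Qed.
HB.instance Definition _ := Monoid.isComLaw.Build R 1 Rmult Rmult_assoc' Rmult_comm Rmult_1_l.
HB.instance Definition _ := Monoid.isMulLaw.Build R 0 Rmult Rmult_0_l Rmult_0_r.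
HB.instance Definition _ := Monoid.isAddLaw.Build R Rmult Rplus Rmult_plus_distr_r Rmult_plus_distr_l.

Lemma Rsum_distrl (I : Type) (r : seq I) (P : pred I) (F : I -> R) a :
  \big[Rplus/0]_(i <- r | P i) F i * a = \big[Rplus/0]_(i <- r | P i) (F i * a).
Proof. exact: (@big_distrl R 0 Rmult Rplus). Qed.

Lemma Rsum_distrr (I : Type) (r : seq I) (P : pred I) (F : I -> R) a :
  a * \big[Rplus/0]_(i <- r | P i) F i = \big[Rplus/0]_(i <- r | P i) (a * F i).
Proof. exact: (@big_distrr R 0 Rmult Rplus). Qed.

Lemma Rprod_Rsum (I J : finType) (F : I -> J -> R) :
  \big[Rmult/1]_(i : I) \big[Rplus/0]_(j : J) F i j
    = \big[Rplus/0]_(f : {ffun I -> J}) \big[Rmult/1]_i F i (f i).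
Proof. exact: (@bigA_distr_bigA R 0 1 Rmult Rplus). Qed.

Lemma Rsum_le (I : Type) (r : seq I) (P : pred I) (F G : I -> R) :
  (forall i, P i -> F i <= G i) ->
  \big[Rplus/0]_(i <- r | P i) F i <= \big[Rplus/0]_(i <- r | P i) G i.
Proof.
move=> FG; apply: (big_ind2 (fun x y => x <= y)) => //; first lra.
by move=> *; lra.
Qed.

Lemma Rsum_ge0 (I : Type) (r : seq I) (P : pred I) (F : I -> R) :
  (forall i, P i -> 0 <= F i) -> 0 <= \big[Rplus/0]_(i <- r | P i) F i.
Proof.
move=> F_ge0; apply: (big_ind (fun x => 0 <= x)) => //; first lra.
by move=> *; lra.
Qed.

Lemma Rprod_ge0 (I : Type) (r : seq I) (P : pred I) (F : I -> R) :
  (forall i, P i -> 0 <= F i) -> 0 <= \big[Rmult/1]_(i <- r | P i) F i.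
Proof.
move=> F_ge0; apply: (big_ind (fun x => 0 <= x)) => //; first lra.
by move=> *; apply: Rmult_le_pos.
Qed.

Lemma Rsum_term_le (I : finType) (F : I -> R) i0 :
  (forall i, 0 <= F i) -> F i0 <= \big[Rplus/0]_(i : I) F i.
Proof.
move=> F_ge0; rewrite (bigD1 i0) //=.
have := @Rsum_ge0 I (index_enum I) (fun i => i != i0) F (fun i _ => F_ge0 i); lra.
Qed.

Lemma Rsum_const (I : finType) (c : R) : \big[Rplus/0]_(i : I) c = INR #|I| * c.
Proof.
rewrite big_const; elim: #|I| => [|n IH]; first by rewrite /=; lra.
rewrite iterS S_INR IH; lra.
Qed.

Lemma Rsum_if_eq (A : finType) (a : A) (F : A -> R) :
  \big[Rplus/0]_(x : A) (if x == a then F x else 0) = F a.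
Proof. by rewrite -big_mkcond /= big_pred1_eq. Qed.

Lemma Rsum_if_eqC (A : finType) (a : A) (F : A -> R) :
  \big[Rplus/0]_(x : A) (if a == x then F x else 0) = F a.
Proof. by rewrite -[RHS](Rsum_if_eq a); apply: eq_bigr => x _; rewrite eq_sym. Qed.

Lemma Rsum_pair_fst (Y Z : finType) (w : Y -> Z -> R) (F : Y -> R) :
  \big[Rplus/0]_(yz : Y * Z) (w yz.1 yz.2 * F yz.1) =
  \big[Rplus/0]_(y : Y) (\big[Rplus/0]_(z : Z) w y z * F y).
Proof.
rewrite -(pair_big xpredT xpredT (fun y z => w y z * F y)) /=.
by apply: eq_bigr => y _; rewrite Rsum_distrl.
Qed.

Lemma Rsum_pair_snd (Y Z : finType) (w : Y -> Z -> R) (F : Z -> R) :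
  \big[Rplus/0]_(yz : Y * Z) (w yz.1 yz.2 * F yz.2) =
  \big[Rplus/0]_(z : Z) (\big[Rplus/0]_(y : Y) w y z * F z).
Proof.
rewrite -(pair_big xpredT xpredT (fun y z => w y z * F z)) /= exchange_big /=.
by apply: eq_bigr => z _; rewrite Rsum_distrl.
Qed.

Lemma sq_le_self x : 0 <= x <= 1 -> x * x <= x.
Proof. by move=> ?; nra. Qed.

Lemma Rabs_le_amgm x d : 0 < d -> Rabs x <= d / 2 + x * x / (2 * d).
Proof.
move=> d_gt0; have -> : d / 2 + x * x / (2 * d) = (d * d + Rabs x * Rabs x) / (2 * d).
  by rewrite -Rabs_mult Rabs_right; [field | apply: Rle_ge; nra]; lra.
apply: (Rmult_le_reg_r (2 * d)); first lra.
rewrite /Rdiv Rmult_assoc Rinv_l; last lra.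
by have := Rle_0_sqr (Rabs x - d); rewrite /Rsqr; lra.
Qed.

Lemma min_le_weighted_sum (I : finType) (w e : I -> R) i0 :
  (forall i, 0 <= w i) -> 0 <= e i0 <= 1 -> (forall i, e i0 <= e i) ->
  e i0 <= \big[Rplus/0]_(i : I) (w i * e i) + Rabs (1 - \big[Rplus/0]_(i : I) w i).
Proof.
move=> w_ge0 e_bound e_min; set mass := \big[Rplus/0]_(i : I) w i.
have avg_le : e i0 * mass <= \big[Rplus/0]_(i : I) (w i * e i).
  rewrite /mass Rmult_comm Rsum_distrl; apply: Rsum_le => i _.
  exact: Rmult_le_compat_l.
have defect_le : e i0 * (1 - mass) <= Rabs (1 - mass).
  have := Rle_abs (1 - mass); have := Rabs_pos (1 - mass); nra.
lra.
Qed.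

Lemma margA_ge0 (A B : finType) (P : A -> B -> R) :
  (forall a b, 0 <= P a b) -> forall a, 0 <= margA P a.
Proof. by move=> P_ge0 a; apply: Rsum_ge0. Qed.

Lemma margB_ge0 (A B : finType) (P : A -> B -> R) :
  (forall a b, 0 <= P a b) -> forall b, 0 <= margB P b.
Proof. by move=> P_ge0 b; apply: Rsum_ge0. Qed.

Lemma joint_le_margA (A B : finType) (P : A -> B -> R) :
  (forall a b, 0 <= P a b) -> forall a b, P a b <= margA P a.
Proof. by move=> P_ge0 a b; apply: Rsum_term_le. Qed.

Lemma joint_le_margB (A B : finType) (P : A -> B -> R) :
  (forall a b, 0 <= P a b) -> forall a b, P a b <= margB P b.
Proof. by move=> P_ge0 a b; apply: (Rsum_term_le (F := P^~ b)). Qed.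

Lemma margB_sum (A B : finType) (P : A -> B -> R) :
  \big[Rplus/0]_(b : B) margB P b = \big[Rplus/0]_(a : A) \big[Rplus/0]_(b : B) P a b.
Proof. exact: exchange_big. Qed.

Lemma massProd_ge0 (A B : finType) (P : A -> B -> R) (S : {set A * B}) :
  (forall a b, 0 <= P a b) -> 0 <= massProd P S.
Proof.
move=> P_ge0; apply: Rsum_ge0 => x _.
by apply: Rmult_le_pos; [exact: margA_ge0 | exact: margB_ge0].
Qed.

Lemma finite_argmin (T : finType) (g : T -> R) (t0 : T) : exists x, forall y, g x <= g y.
Proof.
suff [x xmin] : exists x, forall y, y \in enum T -> g x <= g y.
  by exists x => y; apply: xmin; rewrite mem_enum.
elim: (enum T) => [|a s [x xmin]]; first by exists t0.
case: (Rle_dec (g a) (g x)) => gax.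
  by exists a => y; rewrite in_cons => /orP [/eqP -> | /xmin]; lra.
by exists x => y; rewrite in_cons => /orP [/eqP -> | /xmin] //; lra.
Qed.

(** * Means over random codebooks *)

Section IidMean.
Variables (T A : finType) (p : A -> R).
Hypothesis p_ge0 : forall a, 0 <= p a.
Hypothesis p_sum1 : \big[Rplus/0]_(a : A) p a = 1.

Definition iid_weight (c : {ffun T -> A}) := \big[Rmult/1]_(i : T) p (c i).
Definition iid_mean (g : {ffun T -> A} -> R) :=
  \big[Rplus/0]_(c : {ffun T -> A}) (iid_weight c * g c).

Lemma iid_weight_ge0 c : 0 <= iid_weight c.
Proof. by apply: Rprod_ge0 => i _. Qed.

Lemma iid_mean_ext g g' : (forall c, g c = g' c) -> iid_mean g = iid_mean g'.
Proof. by move=> gg'; apply: eq_bigr => c _; rewrite gg'. Qed.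

Lemma iid_mean_le g g' : (forall c, g c <= g' c) -> iid_mean g <= iid_mean g'.
Proof.
move=> gg'; apply: Rsum_le => c _.
by apply: Rmult_le_compat_l; [exact: iid_weight_ge0 | exact: gg'].
Qed.

Lemma iid_meanD g g' : iid_mean (fun c => g c + g' c) = iid_mean g + iid_mean g'.
Proof. by rewrite /iid_mean -big_split /=; apply: eq_bigr => c _; lra. Qed.

Lemma iid_meanZ k g : iid_mean (fun c => k * g c) = k * iid_mean g.
Proof. by rewrite /iid_mean Rsum_distrr; apply: eq_bigr => c _; lra. Qed.

Lemma iid_mean_sum (B : finType) (F : B -> {ffun T -> A} -> R) :
  iid_mean (fun c => \big[Rplus/0]_(x : B) F x c) = \big[Rplus/0]_(x : B) iid_mean (F x).
Proof. by rewrite /iid_mean exchange_big /=; apply: eq_bigr => c _; rewrite Rsum_distrr. Qed.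

Lemma iid_mean_prod (h : T -> A -> R) :
  iid_mean (fun c => \big[Rmult/1]_(t : T) h t (c t)) =
  \big[Rmult/1]_(t : T) \big[Rplus/0]_(a : A) (p a * h t a).
Proof. by rewrite Rprod_Rsum /iid_mean /iid_weight; apply: eq_bigr => c _; rewrite -big_split. Qed.

Lemma iid_mean_const k : iid_mean (fun _ => k) = k.
Proof.
have mean1 : iid_mean (fun c => \big[Rmult/1]_(t : T) 1) = 1.
  rewrite (iid_mean_prod (fun _ _ => 1)) big1 // => t _.
  by rewrite -[RHS]p_sum1; apply: eq_bigr => a _; lra.
rewrite -[RHS]Rmult_1_r -mean1 -iid_meanZ.
by apply: iid_mean_ext => c; rewrite big1_eq; lra.
Qed.

Lemma iid_mean_coord (i : T) (g : A -> R) :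
  iid_mean (fun c => g (c i)) = \big[Rplus/0]_(a : A) (p a * g a).
Proof.
pose h t := if t == i then g else fun _ : A => 1.
have prod_h c : \big[Rmult/1]_(t : T) h t (c t) = g (c i).
  rewrite (bigD1 i) //= [X in _ * X]big1 /h ?eqxx ?Rmult_1_r //.
  by move=> t /negbTE ->.
rewrite (iid_mean_ext (g' := fun c => \big[Rmult/1]_(t : T) h t (c t))); last by move=> c; rewrite prod_h.
rewrite iid_mean_prod (bigD1 i) //= [X in _ * X]big1 /h ?eqxx ?Rmult_1_r //.
move=> t /negbTE ->; by rewrite -[RHS]p_sum1; apply: eq_bigr => a _; lra.
Qed.

Lemma iid_mean_coord2_mul (i i' : T) (g0 g1 : A -> R) : i != i' ->
  iid_mean (fun c => g0 (c i) * g1 (c i')) =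
  \big[Rplus/0]_(a : A) (p a * g0 a) * \big[Rplus/0]_(a : A) (p a * g1 a).
Proof.
move=> ii'.
pose h t := if t == i then g0 else if t == i' then g1 else fun _ : A => 1.
have hi' : h i' = g1 by rewrite /h eq_sym (negbTE ii') eqxx.
have h_other t : t != i' -> t != i -> h t = fun _ => 1.
  by move=> /negbTE ti' /negbTE ti; rewrite /h ti ti'.
have prod_h c : \big[Rmult/1]_(t : T) h t (c t) = g0 (c i) * g1 (c i').
  rewrite (bigD1 i) //= (bigD1 i') 1?eq_sym //= [X in _ * (_ * X)]big1.
    by rewrite hi' /h eqxx Rmult_1_r.
  by move=> t /andP [ti' ti]; rewrite h_other.
rewrite (iid_mean_ext (g' := fun c => \big[Rmult/1]_(t : T) h t (c t))); last by move=> c; rewrite prod_h.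
rewrite iid_mean_prod (bigD1 i) //= (bigD1 i') 1?eq_sym //= [X in _ * (_ * X)]big1.
  by rewrite hi' /h eqxx Rmult_1_r.
move=> t /andP [ti' ti]; rewrite h_other //.
by rewrite -[RHS]p_sum1; apply: eq_bigr => a _; lra.
Qed.

Lemma iid_mean_coord2 (i i' : T) (g : A -> A -> R) : i != i' ->
  iid_mean (fun c => g (c i) (c i')) =
  \big[Rplus/0]_(a : A) (p a * \big[Rplus/0]_(b : A) (p b * g a b)).
Proof.
move=> ii'; pose ind (a x : A) := if x == a then 1 else 0.
have g_expand (c : {ffun T -> A}) : g (c i) (c i') =
    \big[Rplus/0]_(a : A) \big[Rplus/0]_(b : A) (g a b * (ind a (c i) * ind b (c i'))).
  rewrite (bigD1 (c i)) //= [X in _ = _ + X]big1; last first.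
    by move=> a /negbTE na; rewrite big1 // => b _; rewrite /ind eq_sym na; lra.
  rewrite Rplus_0_r (bigD1 (c i')) //= [X in _ = _ + X]big1; last first.
    by move=> b /negbTE nb; rewrite /ind eq_sym nb; lra.
  rewrite /ind !eqxx; lra.
rewrite (iid_mean_ext g_expand) iid_mean_sum; apply: eq_bigr => a _.
rewrite iid_mean_sum Rsum_distrr; apply: eq_bigr => b _.
have p_ind x : \big[Rplus/0]_(y : A) (p y * ind x y) = p x.
  rewrite -[RHS](Rsum_if_eq x); apply: eq_bigr => y _; rewrite /ind; case: (y == x); lra.
rewrite iid_meanZ iid_mean_coord2_mul // !p_ind; lra.
Qed.

Lemma iid_mean_witness (a0 : A) g k : iid_mean g <= k -> exists c, g c <= k.
Proof.
move=> mean_le; have [c0 c0min] := finite_argmin g [ffun => a0].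
exists c0; apply: Rle_trans mean_le.
by rewrite -[X in X <= _](iid_mean_const (g c0)); exact: iid_mean_le.
Qed.

End IidMean.

Section IidMean2.
Variables (T1 T2 A1 A2 : finType) (p1 : A1 -> R) (p2 : A2 -> R).
Hypothesis p1_ge0 : forall a, 0 <= p1 a.
Hypothesis p2_ge0 : forall a, 0 <= p2 a.
Hypothesis p1_sum1 : \big[Rplus/0]_(a : A1) p1 a = 1.
Hypothesis p2_sum1 : \big[Rplus/0]_(a : A2) p2 a = 1.

Definition iid_mean2 (h : {ffun T1 -> A1} -> {ffun T2 -> A2} -> R) :=
  iid_mean p1 (fun c1 => iid_mean p2 (fun c2 => h c1 c2)).

Lemma iid_mean2_le h h' : (forall c1 c2, h c1 c2 <= h' c1 c2) -> iid_mean2 h <= iid_mean2 h'.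
Proof. by move=> hh'; apply: iid_mean_le => // c1; apply: iid_mean_le. Qed.

Lemma iid_mean2_ext h h' : (forall c1 c2, h c1 c2 = h' c1 c2) -> iid_mean2 h = iid_mean2 h'.
Proof. by move=> hh'; apply: iid_mean_ext => c1; apply: iid_mean_ext. Qed.

Lemma iid_mean2D h h' :
  iid_mean2 (fun c1 c2 => h c1 c2 + h' c1 c2) = iid_mean2 h + iid_mean2 h'.
Proof. by rewrite /iid_mean2 -iid_meanD; apply: iid_mean_ext => c1; exact: iid_meanD. Qed.

Lemma iid_mean2Z k h : iid_mean2 (fun c1 c2 => k * h c1 c2) = k * iid_mean2 h.
Proof. by rewrite /iid_mean2 -iid_meanZ; apply: iid_mean_ext => c1; exact: iid_meanZ. Qed.

Lemma iid_mean2_sum (B : finType) (F : B -> {ffun T1 -> A1} -> {ffun T2 -> A2} -> R) :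
  iid_mean2 (fun c1 c2 => \big[Rplus/0]_(x : B) F x c1 c2) =
  \big[Rplus/0]_(x : B) iid_mean2 (F x).
Proof. by rewrite /iid_mean2 -iid_mean_sum; apply: iid_mean_ext => c1; exact: iid_mean_sum. Qed.

Lemma iid_mean2_const k : iid_mean2 (fun _ _ => k) = k.
Proof.
by rewrite /iid_mean2 (iid_mean_ext _ (g' := fun _ => k)) ?iid_mean_const // => c1;
  rewrite iid_mean_const.
Qed.

Lemma iid_mean2_if (b : bool) h :
  iid_mean2 (fun c1 c2 => if b then h c1 c2 else 0) = if b then iid_mean2 h else 0.
Proof. by case: b; rewrite ?iid_mean2_const. Qed.

Lemma iid_mean2_coord (a : T1) (b : T2) (g : A1 -> A2 -> R) :
  iid_mean2 (fun c1 c2 => g (c1 a) (c2 b)) =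
  \big[Rplus/0]_(u : A1) (p1 u * \big[Rplus/0]_(v : A2) (p2 v * g u v)).
Proof.
rewrite /iid_mean2 -(iid_mean_coord p1_sum1 a).
by apply: iid_mean_ext => c1; exact: iid_mean_coord.
Qed.

Lemma iid_mean2_coord21 (a a' : T1) (b : T2) (g : A1 -> A1 -> A2 -> R) : a != a' ->
  iid_mean2 (fun c1 c2 => g (c1 a) (c1 a') (c2 b)) =
  \big[Rplus/0]_(u : A1) (p1 u * \big[Rplus/0]_(u' : A1) (p1 u' *
     \big[Rplus/0]_(v : A2) (p2 v * g u u' v))).
Proof.
move=> aa'; rewrite /iid_mean2 -(iid_mean_coord2 p1_sum1 _ aa').
by apply: iid_mean_ext => c1; exact: iid_mean_coord.
Qed.

Lemma iid_mean2_coord12 (a : T1) (b b' : T2) (g : A1 -> A2 -> A2 -> R) : b != b' ->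
  iid_mean2 (fun c1 c2 => g (c1 a) (c2 b) (c2 b')) =
  \big[Rplus/0]_(u : A1) (p1 u * \big[Rplus/0]_(v : A2) (p2 v *
     \big[Rplus/0]_(v' : A2) (p2 v' * g u v v'))).
Proof.
move=> bb'; rewrite /iid_mean2 -(iid_mean_coord p1_sum1 a).
by apply: iid_mean_ext => c1; exact: iid_mean_coord2.
Qed.

Lemma iid_mean2_coord22 (a a' : T1) (b b' : T2) (g : A1 -> A1 -> A2 -> A2 -> R) :
  a != a' -> b != b' ->
  iid_mean2 (fun c1 c2 => g (c1 a) (c1 a') (c2 b) (c2 b')) =
  \big[Rplus/0]_(u : A1) (p1 u * \big[Rplus/0]_(u' : A1) (p1 u' *
  \big[Rplus/0]_(v : A2) (p2 v * \big[Rplus/0]_(v' : A2) (p2 v' * g u u' v v')))).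
Proof.
move=> aa' bb'; rewrite /iid_mean2 -(iid_mean_coord2 p1_sum1 _ aa').
by apply: iid_mean_ext => c1; exact: iid_mean_coord2.
Qed.

End IidMean2.

Lemma iid_mean2C (T1 T2 A1 A2 : finType) (p1 : A1 -> R) (p2 : A2 -> R)
  (h : {ffun T1 -> A1} -> {ffun T2 -> A2} -> R) :
  iid_mean2 p1 p2 h = iid_mean2 p2 p1 (fun c2 c1 => h c1 c2).
Proof.
rewrite /iid_mean2 /iid_mean.
under eq_bigr => c1 _ do rewrite Rsum_distrr.
rewrite exchange_big /=; apply: eq_bigr => c2 _; rewrite Rsum_distrr.
by apply: eq_bigr => c1 _; ring.
Qed.

(** * Packing bounds for marked codewords *)

Section Packing.
Variables (A B O : finType) (P : A -> B -> R) (K : A -> B -> O -> R) (r : A -> B -> R).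
Hypothesis P_ge0 : forall a b, 0 <= P a b.
Hypothesis P_sum1 : \big[Rplus/0]_(a : A) \big[Rplus/0]_(b : B) P a b = 1.
Hypothesis K_ge0 : forall a b o, 0 <= K a b o.
Hypothesis K_sum1 : forall a b, \big[Rplus/0]_(o : O) K a b o = 1.
Hypothesis r_le : forall a b, margA P a * margB P b * r a b <= P a b.

Let pA := margA P.
Let pB := margB P.
Let J a o := \big[Rplus/0]_(b : B) (P a b * K a b o).

Let pA_sum1 : \big[Rplus/0]_(a : A) pA a = 1. Proof. exact: P_sum1. Qed.
Let pB_sum1 : \big[Rplus/0]_(b : B) pB b = 1. Proof. by rewrite margB_sum. Qed.

Lemma margA_joint a : margA J a = pA a.
Proof.
rewrite /margA /J exchange_big; apply: eq_bigr => b _.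
by rewrite -Rsum_distrr K_sum1 Rmult_1_r.
Qed.

Lemma Rsum_joint (g : A -> O -> R) :
  \big[Rplus/0]_(a : A) \big[Rplus/0]_(b : B) (P a b * \big[Rplus/0]_(o : O) (K a b o * g a o))
  = \big[Rplus/0]_(a : A) \big[Rplus/0]_(o : O) (J a o * g a o).
Proof.
apply: eq_bigr => a _; under eq_bigr => b _ do rewrite Rsum_distrr.
rewrite exchange_big; apply: eq_bigr => o _.
by rewrite /J Rsum_distrl; apply: eq_bigr => b _; ring.
Qed.

Lemma ratio_weighted_le (h : A -> B -> R) : (forall a b, 0 <= h a b) ->
  \big[Rplus/0]_(a : A) (pA a * \big[Rplus/0]_(b : B) (pB b * (r a b * h a b)))
  <= \big[Rplus/0]_(a : A) \big[Rplus/0]_(b : B) (P a b * h a b).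
Proof.
move=> h_ge0; apply: Rsum_le => a _; rewrite Rsum_distrr; apply: Rsum_le => b _.
have -> : pA a * (pB b * (r a b * h a b)) = (pA a * pB b * r a b) * h a b by ring.
exact: Rmult_le_compat_r (h_ge0 a b) (r_le a b).
Qed.

Variable S : {set A * O}.

Lemma massP_complE : 1 - massP J S =
  \big[Rplus/0]_(a : A) \big[Rplus/0]_(o : O) (J a o * (if (a, o) \in S then 0 else 1)).
Proof.
have J_sum1 : \big[Rplus/0]_(x : A * O) J x.1 x.2 = 1.
  rewrite -(pair_big xpredT xpredT J) /= -pA_sum1.
  by apply: eq_bigr => a _; exact: margA_joint.
rewrite /massP -{1}J_sum1 (bigID (fun x => x \in S) xpredT) /=.
rewrite [RHS](pair_big xpredT xpredT) /=.
rewrite [X in _ + X - _ = _]big_mkcond /=.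
have -> : forall x y, x + y - x = y by move=> x y; ring.
by apply: eq_bigr => -[a o] _ /=; case: ((a, o) \in S) => /=; ring.
Qed.

Lemma massProdE : massProd J S =
  \big[Rplus/0]_(a : A) (pA a * \big[Rplus/0]_(o : O) (margB J o * (if (a, o) \in S then 1 else 0))).
Proof.
under [RHS]eq_bigr => a _ do rewrite Rsum_distrr.
rewrite [RHS](pair_big xpredT xpredT) /massProd big_mkcond /=.
by apply: eq_bigr => -[a o] _ /=; rewrite margA_joint; case: ((a, o) \in S); ring.
Qed.

Variables (I1 I2 : finType) (a0 a1 : I1) (b0 : I2).

Lemma mean_miss_le :
  iid_mean2 pA pB (fun (cA : {ffun I1 -> A}) (cB : {ffun I2 -> B}) =>
    r (cA a0) (cB b0) * \big[Rplus/0]_(o : O)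
      (K (cA a0) (cB b0) o * (if (cA a0, o) \in S then 0 else 1)))
  <= 1 - massP J S.
Proof.
rewrite (iid_mean2_coord pA_sum1 pB_sum1 _ _
  (fun a b => r a b * \big[Rplus/0]_(o : O) (K a b o * (if (a, o) \in S then 0 else 1)))).
rewrite massP_complE -Rsum_joint; apply: ratio_weighted_le => a b.
by apply: Rsum_ge0 => o _; case: ifP => _; rewrite ?Rmult_0_r ?Rmult_1_r //; lra.
Qed.

Hypothesis a0a1 : a0 != a1.

Lemma mean_false_hit_le :
  iid_mean2 pA pB (fun (cA : {ffun I1 -> A}) (cB : {ffun I2 -> B}) =>
    r (cA a0) (cB b0) * \big[Rplus/0]_(o : O)
      (K (cA a0) (cB b0) o * (if (cA a1, o) \in S then 1 else 0)))
  <= massProd J S.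
Proof.
pose hit a' a b := \big[Rplus/0]_(o : O) (K a b o * (if (a', o) \in S then 1 else 0)).
rewrite (iid_mean2_coord21 pA_sum1 pB_sum1 _
  (fun a a' b => r a b * hit a' a b) a0a1) massProdE.
under eq_bigr => a _ do rewrite Rsum_distrr.
rewrite exchange_big /=; apply: Rsum_le => a' _.
under eq_bigr => a _ do rewrite -Rmult_assoc (Rmult_comm (pA a)) Rmult_assoc.
rewrite -Rsum_distrr; apply: Rmult_le_compat_l; first exact: margA_ge0.
have hit_ge0 a b : 0 <= hit a' a b.
  by apply: Rsum_ge0 => o _; case: ifP => _; rewrite ?Rmult_0_r ?Rmult_1_r //; lra.
apply: Rle_trans (ratio_weighted_le hit_ge0) _.
apply: Req_le; rewrite Rsum_joint exchange_big /=; apply: eq_bigr => o _.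
by rewrite Rsum_distrl; apply: eq_bigr => a _; ring.
Qed.

End Packing.

(** * The marking function *)

Section Marking.
Variables (U V : finType) (pUV : U -> V -> R) (G : {set U * V}) (c : R).
Hypothesis P_ge0 : forall u v, 0 <= pUV u v.
Hypothesis c_ge0 : 0 <= c.
Hypothesis G_bound : forall u v, (u, v) \in G -> 0 < pUV u v ->
  pUV u v <= c * (margA pUV u * margB pUV v).

Let pU := margA pUV.
Let pV := margB pUV.
Let mu := massP pUV G.

(* Where [pU u * pV v = 0] also [pUV u v = 0], so the junk value [x / 0 = 0]
   is harmless. *)
Definition lratio u v := if (u, v) \in G then pUV u v / (pU u * pV v) else 0.

Lemma lratio_mulE u v : pU u * pV v * lratio u v = if (u, v) \in G then pUV u v else 0.
Proof.
rewrite /lratio; case: ((u, v) \in G); last lra.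
case: (Req_dec (pU u * pV v) 0) => [pUpV0 | pUpV_neq0].
  2: by rewrite /Rdiv Rmult_comm Rmult_assoc Rinv_l // Rmult_1_r.
have := P_ge0 u v; have := joint_le_margA P_ge0 u v; have := joint_le_margB P_ge0 u v.
by rewrite -/pU -/pV pUpV0 Rmult_0_l; case: (Rmult_integral _ _ pUpV0); lra.
Qed.

Lemma lratio_ge0 u v : 0 <= lratio u v.
Proof.
rewrite /lratio; case: ifP => _; last lra.
apply: Rmult_le_pos; first exact: P_ge0.
case: (Req_dec (pU u * pV v) 0) => [-> | ?]; first by rewrite Rinv_0; lra.
apply/Rlt_le/Rinv_0_lt_compat.
by have := Rmult_le_pos _ _ (margA_ge0 P_ge0 u) (margB_ge0 P_ge0 v); rewrite -/pU -/pV; lra.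
Qed.

Lemma lratio_le_joint u v : pU u * pV v * lratio u v <= pUV u v.
Proof. by rewrite lratio_mulE; case: ifP => _; [lra | exact: P_ge0]. Qed.

Lemma lratio_le u v : lratio u v <= c.
Proof.
rewrite /lratio; case: ifP => uvG; last lra.
case: (Rle_lt_or_eq_dec 0 (pUV u v) (P_ge0 u v)) => [P_gt0 | <-]; last by rewrite /Rdiv Rmult_0_l.
have pUpV_gt0 : 0 < pU u * pV v.
  by have := joint_le_margA P_ge0 u v; have := joint_le_margB P_ge0 u v; rewrite -/pU -/pV; nra.
apply: (Rmult_le_reg_r (pU u * pV v)) => //.
by rewrite /Rdiv Rmult_assoc Rinv_l; [rewrite Rmult_1_r; exact: G_bound | lra].
Qed.

Definition lratio_row u := \big[Rplus/0]_(v : V) (pV v * lratio u v).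
Definition lratio_col v := \big[Rplus/0]_(u : U) (pU u * lratio u v).

Lemma lratio_mean : \big[Rplus/0]_(u : U) (pU u * lratio_row u) = mu.
Proof.
under eq_bigr => u _ do rewrite /lratio_row Rsum_distrr.
rewrite (pair_big xpredT xpredT) /mu /massP [RHS]big_mkcond /=.
by apply: eq_bigr => -[u v] _ /=; rewrite -lratio_mulE; ring.
Qed.

Lemma lratio_col_mean : \big[Rplus/0]_(v : V) (pV v * lratio_col v) = mu.
Proof.
rewrite -lratio_mean /lratio_row /lratio_col.
under eq_bigr => v _ do rewrite Rsum_distrr.
rewrite exchange_big /=; apply: eq_bigr => u _; rewrite Rsum_distrr.
by apply: eq_bigr => v _; ring.
Qed.

Lemma lratio_row_bound u : 0 <= lratio_row u <= 1.
Proof.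
have row_ge0 : 0 <= lratio_row u.
  by apply: Rsum_ge0 => v _; apply: Rmult_le_pos; [exact: Rsum_ge0 | exact: lratio_ge0].
split=> //; case: (Rle_lt_or_eq_dec 0 (pU u) (margA_ge0 P_ge0 u)) => pU_pos.
  apply: (Rmult_le_reg_l (pU u)) => //; rewrite Rmult_1_r /lratio_row Rsum_distrr.
  apply: Rsum_le => v _; rewrite -Rmult_assoc; exact: lratio_le_joint.
rewrite /lratio_row big1; first lra.
move=> v _; rewrite /lratio; case: ifP => _; last lra.
by rewrite -pU_pos Rmult_0_l /Rdiv Rinv_0 !Rmult_0_r.
Qed.

Lemma lratio_col_bound v : 0 <= lratio_col v <= 1.
Proof.
have col_ge0 : 0 <= lratio_col v.
  by apply: Rsum_ge0 => u _; apply: Rmult_le_pos; [exact: Rsum_ge0 | exact: lratio_ge0].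
split=> //; case: (Rle_lt_or_eq_dec 0 (pV v) (margB_ge0 P_ge0 v)) => pV_pos.
  apply: (Rmult_le_reg_l (pV v)) => //; rewrite Rmult_1_r /lratio_col Rsum_distrr.
  by apply: Rsum_le => u _; rewrite -Rmult_assoc (Rmult_comm (pV v)); exact: lratio_le_joint.
rewrite /lratio_col big1; first lra.
move=> u _; rewrite /lratio; case: ifP => _; last lra.
by rewrite -pV_pos Rmult_0_r /Rdiv Rinv_0 !Rmult_0_r.
Qed.

Lemma lratio_sq_mean_le :
  \big[Rplus/0]_(u : U) (pU u * \big[Rplus/0]_(v : V) (pV v * (lratio u v * lratio u v)))
  <= c * mu.
Proof.
rewrite -lratio_mean Rsum_distrr; apply: Rsum_le => u _.
rewrite -Rmult_assoc (Rmult_comm c) Rmult_assoc.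
apply: Rmult_le_compat_l; first exact: Rsum_ge0.
rewrite /lratio_row Rsum_distrr; apply: Rsum_le => v _.
have := Rmult_le_pos _ _ (margB_ge0 P_ge0 v) (lratio_ge0 u v); have := lratio_le u v.
by rewrite -/pV; nra.
Qed.

Lemma lratio_mean_same_fst_le :
  \big[Rplus/0]_(u : U) (pU u * \big[Rplus/0]_(v : V) (pV v *
     \big[Rplus/0]_(v' : V) (pV v' * (lratio u v * lratio u v')))) <= mu.
Proof.
rewrite -lratio_mean; apply: Rsum_le => u _.
apply: Rmult_le_compat_l; first exact: Rsum_ge0.
apply: Rle_trans (sq_le_self (lratio_row_bound u)); apply: Req_le.
rewrite /lratio_row Rsum_distrl; apply: eq_bigr => v _.
by rewrite !Rsum_distrr; apply: eq_bigr => v' _; ring.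
Qed.

Lemma lratio_mean_same_snd_le :
  \big[Rplus/0]_(u : U) (pU u * \big[Rplus/0]_(u' : U) (pU u' *
     \big[Rplus/0]_(v : V) (pV v * (lratio u v * lratio u' v)))) <= mu.
Proof.
have -> : \big[Rplus/0]_(u : U) (pU u * \big[Rplus/0]_(u' : U) (pU u' *
     \big[Rplus/0]_(v : V) (pV v * (lratio u v * lratio u' v)))) =
   \big[Rplus/0]_(v : V) (pV v * (lratio_col v * lratio_col v)).
  under eq_bigr => u _ do (rewrite Rsum_distrr; under eq_bigr => u' _ do rewrite !Rsum_distrr;
    rewrite exchange_big /=).
  rewrite exchange_big /=; apply: eq_bigr => v _.
  rewrite /lratio_col Rsum_distrl Rsum_distrr; apply: eq_bigr => u _.
  by rewrite !Rsum_distrr; apply: eq_bigr => u' _; ring.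
rewrite -lratio_col_mean; apply: Rsum_le => v _.
apply: Rmult_le_compat_l; first exact: margB_ge0.
exact: sq_le_self (lratio_col_bound v).
Qed.

Lemma lratio_mean_indep :
  \big[Rplus/0]_(u : U) (pU u * \big[Rplus/0]_(u' : U) (pU u' *
     \big[Rplus/0]_(v : V) (pV v * \big[Rplus/0]_(v' : V) (pV v' * (lratio u v * lratio u' v')))))
  = mu * mu.
Proof.
rewrite -lratio_mean Rsum_distrl; apply: eq_bigr => u _.
rewrite Rmult_assoc; congr (_ * _); rewrite Rsum_distrr; apply: eq_bigr => u' _.
rewrite /lratio_row -Rmult_assoc (Rmult_comm _ (pU u')) Rmult_assoc; congr (_ * _).
rewrite Rsum_distrl; apply: eq_bigr => v _.
by rewrite Rmult_assoc; congr (_ * _); rewrite Rsum_distrr; apply: eq_bigr => v' _; ring.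
Qed.

End Marking.

(** * The random code *)

Section ListDecoding.
Variables (A O : finType) (S : {set A * O}) (M L : nat) (m0 : 'I_M).

(* Message [m] owns the list of codewords [cb (m, j)], [j < L]. *)
Definition list_decoder (cb : {ffun 'I_M * 'I_L -> A}) (o : O) : 'I_M :=
  odflt m0 [pick m | [exists j, (cb (m, j), o) \in S]].

Definition rival_hits (cb : {ffun 'I_M * 'I_L -> A}) (m : 'I_M) (o : O) : R :=
  \big[Rplus/0]_(i : 'I_M * 'I_L) (if i.1 != m then (if (cb i, o) \in S then 1 else 0) else 0).

Lemma rival_hits_ge0 cb m o : 0 <= rival_hits cb m o.
Proof. by apply: Rsum_ge0 => i _; repeat case: ifP => _; lra. Qed.

Lemma list_decoder_error cb m j o : list_decoder cb o != m ->
  (cb (m, j), o) \notin S \/ 1 <= rival_hits cb m o.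
Proof.
rewrite /list_decoder; case: pickP => [m' /existsP [j' hit] | no_hit] /= dec_m.
  right; have := @Rsum_term_le _ (fun i : 'I_M * 'I_L =>
    if i.1 != m then (if (cb i, o) \in S then 1 else 0) else 0) (m', j').
  by rewrite /= dec_m hit; apply => i; repeat case: ifP => _; lra.
left; apply/negP => hit.
have : [exists j', (cb (m, j'), o) \in S] by apply/existsP; exists j.
by rewrite no_hit.
Qed.

Lemma Rsum_rival_hits cb m (w : O -> R) :
  \big[Rplus/0]_(o : O) (w o * rival_hits cb m o) =
  \big[Rplus/0]_(i : 'I_M * 'I_L) (if i.1 != m then
     \big[Rplus/0]_(o : O) (w o * (if (cb i, o) \in S then 1 else 0)) else 0).
Proof.
under eq_bigr => o _ do rewrite /rival_hits Rsum_distrr.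
rewrite exchange_big /=; apply: eq_bigr => i _.
by case: ifP => _ //; apply: big1 => o _; lra.
Qed.

End ListDecoding.

Section Coding.
Variables (X Y Z U V : finType) (W : Y -> Z -> X -> R) (pUV : U -> V -> R) (f : U -> V -> X).
Hypothesis W_ge0 : forall y z x, 0 <= W y z x.
Hypothesis W_sum1 : forall x, \big[Rplus/0]_(yz : Y * Z) W yz.1 yz.2 x = 1.
Hypothesis P_ge0 : forall u v, 0 <= pUV u v.
Hypothesis P_sum1 : \big[Rplus/0]_(u : U) \big[Rplus/0]_(v : V) pUV u v = 1.
Variables (S1 : {set U * Y}) (S2 : {set V * Z}) (G : {set U * V}) (c : R).
Hypothesis c_ge0 : 0 <= c.
Hypothesis G_bound : forall u v, (u, v) \in G -> 0 < pUV u v ->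
  pUV u v <= c * (margA pUV u * margB pUV v).
Hypothesis G_mass_gt0 : 0 < massP pUV G.

Let pU := margA pUV.
Let pV := margB pUV.
Let mu := massP pUV G.
Let mu_gt0 : 0 < mu := G_mass_gt0.
Let r := lratio pUV G.
Let pU_sum1 : \big[Rplus/0]_(u : U) pU u = 1. Proof. exact: P_sum1. Qed.
Let pV_sum1 : \big[Rplus/0]_(v : V) pV v = 1. Proof. by rewrite margB_sum. Qed.
Let r_ge0 u v : 0 <= r u v. Proof. exact: lratio_ge0. Qed.

(* [chanZ] takes [v] first: the [Z] side is the [Y] side with [U] and [V] swapped. *)
Definition chanY u v y := \big[Rplus/0]_(z : Z) W y z (f u v).
Definition chanZ v u z := \big[Rplus/0]_(y : Y) W y z (f u v).

Lemma chanY_ge0 u v y : 0 <= chanY u v y. Proof. exact: Rsum_ge0. Qed.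
Lemma chanZ_ge0 v u z : 0 <= chanZ v u z. Proof. exact: Rsum_ge0. Qed.
Lemma chanY_sum1 u v : \big[Rplus/0]_(y : Y) chanY u v y = 1.
Proof. by rewrite -(W_sum1 (f u v)) /chanY (pair_big xpredT xpredT (fun y z => W y z (f u v))). Qed.
Lemma chanZ_sum1 v u : \big[Rplus/0]_(z : Z) chanZ v u z = 1.
Proof.
rewrite -(W_sum1 (f u v)) /chanZ exchange_big /=.
by rewrite (pair_big xpredT xpredT (fun y z => W y z (f u v))).
Qed.

Variables (M1 M2 L1 L2 : nat) (m10 : 'I_M1) (m20 : 'I_M2).

Let dec1 : {ffun 'I_M1 * 'I_L1 -> U} -> Y -> 'I_M1 := list_decoder S1 m10.
Let dec2 : {ffun 'I_M2 * 'I_L2 -> V} -> Z -> 'I_M2 := list_decoder S2 m20.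

Definition cond_err (cU : {ffun 'I_M1 * 'I_L1 -> U}) (cV : {ffun 'I_M2 * 'I_L2 -> V})
  (m1 : 'I_M1) (m2 : 'I_M2) (jk : 'I_L1 * 'I_L2) :=
  \big[Rplus/0]_(yz : Y * Z)
    (if (dec1 cU yz.1 == m1) && (dec2 cV yz.2 == m2) then 0
     else W yz.1 yz.2 (f (cU (m1, jk.1)) (cV (m2, jk.2)))).

Lemma cond_err_bound cU cV m1 m2 jk : 0 <= cond_err cU cV m1 m2 jk <= 1.
Proof.
split; first by apply: Rsum_ge0 => yz _; case: ifP => _; [lra | exact: W_ge0].
rewrite -(W_sum1 (f (cU (m1, jk.1)) (cV (m2, jk.2)))); apply: Rsum_le => yz _.
by case: ifP => _; [exact: W_ge0 | lra].
Qed.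

Let miss (b : bool) : R := if b then 0 else 1.

Lemma decoding_error_le cU cV m1 m2 j k y z :
  miss ((dec1 cU y == m1) && (dec2 cV z == m2)) <=
  miss ((cU (m1, j), y) \in S1) + rival_hits S1 cU m1 y +
  miss ((cV (m2, k), z) \in S2) + rival_hits S2 cV m2 z.
Proof.
have h1 := rival_hits_ge0 S1 cU m1 y; have h2 := rival_hits_ge0 S2 cV m2 z.
have miss_ge0 b : 0 <= miss b by rewrite /miss; case: b; lra.
have := miss_ge0 ((cU (m1, j), y) \in S1); have := miss_ge0 ((cV (m2, k), z) \in S2).
case ok : (_ && _); first by rewrite [miss true]/miss; lra.
move/negbT: ok; rewrite negb_and /miss => /orP [/(list_decoder_error j) | /(list_decoder_error k)].
  by case=> [/negbTE -> | ]; lra.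
by case=> [/negbTE -> | ]; lra.
Qed.

Lemma cond_err_le (cU : {ffun 'I_M1 * 'I_L1 -> U}) (cV : {ffun 'I_M2 * 'I_L2 -> V})
  (m1 : 'I_M1) (m2 : 'I_M2) (j : 'I_L1) (k : 'I_L2) :
  let u := cU (m1, j) in let v := cV (m2, k) in
  cond_err cU cV m1 m2 (j, k) <=
  \big[Rplus/0]_(y : Y) (chanY u v y * miss ((u, y) \in S1))
  + \big[Rplus/0]_(i : 'I_M1 * 'I_L1) (if i.1 != m1 then
     \big[Rplus/0]_(y : Y) (chanY u v y * (if (cU i, y) \in S1 then 1 else 0)) else 0)
  + \big[Rplus/0]_(z : Z) (chanZ v u z * miss ((v, z) \in S2))
  + \big[Rplus/0]_(i : 'I_M2 * 'I_L2) (if i.1 != m2 then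
     \big[Rplus/0]_(z : Z) (chanZ v u z * (if (cV i, z) \in S2 then 1 else 0)) else 0).
Proof.
move=> u v; rewrite -Rsum_rival_hits -Rsum_rival_hits.
rewrite -(Rsum_pair_fst (fun y z => W y z (f u v))) -(Rsum_pair_fst (fun y z => W y z (f u v))).
rewrite -(Rsum_pair_snd (fun y z => W y z (f u v))) -(Rsum_pair_snd (fun y z => W y z (f u v))).
rewrite -!big_split /=; apply: Rsum_le => -[y z] _ /=.
have := decoding_error_le cU cV m1 m2 j k y z; rewrite /miss -/u -/v => err_le.
have W_pos := W_ge0 y z (f u v).
case: ifP => dec_ok; rewrite dec_ok in err_le.
  have := rival_hits_ge0 S1 cU m1 y; have := rival_hits_ge0 S2 cV m2 z.
  by case: ((u, y) \in S1); case: ((v, z) \in S2) => *; nra.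
rewrite -!Rmult_plus_distr_l -[X in X <= _]Rmult_1_r.
exact: Rmult_le_compat_l.
Qed.

Let Pswap v u := pUV u v.
Let Pswap_sum1 : \big[Rplus/0]_(v : V) \big[Rplus/0]_(u : U) Pswap v u = 1.
Proof. by rewrite /Pswap exchange_big. Qed.
Let lratio_le_joint_swap v u : margA Pswap v * margB Pswap u * r u v <= Pswap v u.
Proof.
change (pV v * pU u * r u v <= pUV u v).
by rewrite (Rmult_comm (pV v)); exact: lratio_le_joint.
Qed.

Definition packing_bound :=
  (1 - massP (joint_UY pUV f W) S1) + INR M1 * INR L1 * massProd (joint_UY pUV f W) S1
  + (1 - massP (joint_VZ pUV f W) S2) + INR M2 * INR L2 * massProd (joint_VZ pUV f W) S2.

Lemma mean_marked_cond_err_le m1 m2 j k :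
  iid_mean2 pU pV (fun (cU : {ffun 'I_M1 * 'I_L1 -> U}) (cV : {ffun 'I_M2 * 'I_L2 -> V}) =>
     r (cU (m1, j)) (cV (m2, k)) * cond_err cU cV m1 m2 (j, k)) <= packing_bound.
Proof.
set a := (m1, j); set b := (m2, k).
apply: Rle_trans (iid_mean2_le (margA_ge0 P_ge0) (margB_ge0 P_ge0) (fun cU cV =>
  Rmult_le_compat_l _ _ _ (r_ge0 _ _) (cond_err_le cU cV m1 m2 j k))) _ => /=.
rewrite /packing_bound; under iid_mean2_ext => cU cV do
  rewrite !Rmult_plus_distr_l [r _ _ * \big[Rplus/0]_(i : 'I_M1 * 'I_L1) _]Rsum_distrr
          [r _ _ * \big[Rplus/0]_(i : 'I_M2 * 'I_L2) _]Rsum_distrr.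
rewrite !iid_mean2D !iid_mean2_sum.
have jUY_ge0 u y : 0 <= joint_UY pUV f W u y.
  by apply: Rsum_ge0 => v _; apply: Rmult_le_pos => //; exact: chanY_ge0.
have jVZ_ge0 v z : 0 <= joint_VZ pUV f W v z.
  by apply: Rsum_ge0 => u _; apply: Rmult_le_pos => //; exact: chanZ_ge0.
have card_codebook (M L : nat) : INR M * INR L = INR #|{: 'I_M * 'I_L}|.
  by rewrite card_prod !card_ord mult_INR.
apply: Rplus_le_compat; [apply: Rplus_le_compat; [apply: Rplus_le_compat|]|].
- exact: (mean_miss_le P_sum1 chanY_ge0 chanY_sum1 (lratio_le_joint G P_ge0)).
- rewrite card_codebook -Rsum_const; apply: Rsum_le => i _.
  under iid_mean2_ext => cU cV do rewrite fun_if Rmult_0_r.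
  rewrite iid_mean2_if //; case: ifP => [i_neq | _]; last exact: massProd_ge0.
  have a_i : a != i by apply: contraNneq i_neq => <-.
  exact: (mean_false_hit_le P_ge0 P_sum1 chanY_ge0 chanY_sum1 (lratio_le_joint G P_ge0) _ _ a_i).
- rewrite iid_mean2C.
  exact: (mean_miss_le Pswap_sum1 chanZ_ge0 chanZ_sum1 lratio_le_joint_swap).
- rewrite card_codebook -Rsum_const; apply: Rsum_le => i _.
  rewrite iid_mean2C; under iid_mean2_ext => cV cU do rewrite fun_if Rmult_0_r.
  rewrite iid_mean2_if //; case: ifP => [i_neq | _]; last exact: massProd_ge0.
  have b_i : b != i by apply: contraNneq i_neq => <-.
  exact: (mean_false_hit_le (fun v u => P_ge0 u v) Pswap_sum1 chanZ_ge0 chanZ_sum1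
    lratio_le_joint_swap _ _ b_i).
Qed.

Hypothesis L1_gt0 : 0 < INR L1.
Hypothesis L2_gt0 : 0 < INR L2.
Variable d : R.
Hypothesis d_gt0 : 0 < d.

Let N := INR L1 * INR L2 * mu.
Let N_gt0 : 0 < N.
Proof. by rewrite /N; apply: Rmult_lt_0_compat => //; exact: Rmult_lt_0_compat. Qed.

(* The normalisation [N] makes the mean total weight of a message pair 1
   (lemma [mean_mark_mass]). *)
Definition mark_weight (cU : {ffun 'I_M1 * 'I_L1 -> U}) (cV : {ffun 'I_M2 * 'I_L2 -> V})
  m1 m2 (jk : 'I_L1 * 'I_L2) := / N * r (cU (m1, jk.1)) (cV (m2, jk.2)).

Definition mark_mass cU cV m1 m2 := \big[Rplus/0]_(jk : 'I_L1 * 'I_L2) mark_weight cU cV m1 m2 jk.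

Definition marked_err cU cV m1 m2 :=
  \big[Rplus/0]_(jk : 'I_L1 * 'I_L2) (mark_weight cU cV m1 m2 jk * cond_err cU cV m1 m2 jk).

Lemma mark_weight_ge0 cU cV m1 m2 jk : 0 <= mark_weight cU cV m1 m2 jk.
Proof. by apply: Rmult_le_pos; [apply/Rlt_le/Rinv_0_lt_compat | exact: r_ge0]. Qed.

Lemma mean_marked_err_le m1 m2 :
  iid_mean2 pU pV (fun cU cV => marked_err cU cV m1 m2) <= packing_bound / mu.
Proof.
rewrite /marked_err iid_mean2_sum.
apply: Rle_trans (_ : \big[Rplus/0]_(jk : 'I_L1 * 'I_L2) (/ N * packing_bound) <= _).
  apply: Rsum_le => -[j k] _; rewrite /mark_weight.
  under iid_mean2_ext => cU cV do rewrite /= Rmult_assoc.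
  rewrite iid_mean2Z; apply: Rmult_le_compat_l; first exact/Rlt_le/Rinv_0_lt_compat.
  exact: mean_marked_cond_err_le.
rewrite Rsum_const card_prod !card_ord mult_INR /N.
by apply: Req_le; field; repeat split; lra.
Qed.

Lemma mean_mark_mass m1 m2 : iid_mean2 pU pV (fun cU cV => mark_mass cU cV m1 m2) = 1.
Proof.
rewrite /mark_mass iid_mean2_sum (eq_bigr (fun _ => / N * mu)).
  by rewrite Rsum_const card_prod !card_ord mult_INR /N; field; repeat split; lra.
move=> -[j k] _; rewrite /mark_weight iid_mean2Z.
by rewrite (iid_mean2_coord pU_sum1 pV_sum1 (m1, j) (m2, k) r) lratio_mean.
Qed.

Lemma mean_mark_pair_le m1 m2 (jk jk' : 'I_L1 * 'I_L2) :
  iid_mean2 pU pV (fun (cU : {ffun 'I_M1 * 'I_L1 -> U}) (cV : {ffun 'I_M2 * 'I_L2 -> V}) =>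
     r (cU (m1, jk.1)) (cV (m2, jk.2)) * r (cU (m1, jk'.1)) (cV (m2, jk'.2))) <=
  (if jk == jk' then c * mu else 0) + (if jk.1 == jk'.1 then mu else 0) +
  (if jk.2 == jk'.2 then mu else 0) + mu * mu.
Proof.
have mu2_ge0 : 0 <= mu * mu by apply: Rmult_le_pos; lra.
have := Rmult_le_pos _ _ c_ge0 (Rlt_le _ _ mu_gt0) => cmu_ge0.
case: jk jk' => j k [j' k'] /=.
have m1_neq (j'' : 'I_L1) : j != j'' -> (m1, j) != (m1, j'') by rewrite xpair_eqE eqxx.
have m2_neq (k'' : 'I_L2) : k != k'' -> (m2, k) != (m2, k'') by rewrite xpair_eqE eqxx.
case: (eqVneq j j') => [<- | jj']; case: (eqVneq k k') => [<- | kk'].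
- rewrite !eqxx (iid_mean2_coord pU_sum1 pV_sum1 _ _ (fun u v => r u v * r u v)).
  by have := lratio_sq_mean_le P_ge0 c_ge0 G_bound; rewrite -/pU -/pV -/r -/mu; lra.
- rewrite (iid_mean2_coord12 pU_sum1 pV_sum1 _ (fun u v v' => r u v * r u v') (m2_neq _ kk')).
  by have := lratio_mean_same_fst_le G P_ge0; rewrite -/pU -/pV -/r -/mu; case: ifP => _; lra.
- rewrite (iid_mean2_coord21 pU_sum1 pV_sum1 _ (fun u u' v => r u v * r u' v) (m1_neq _ jj')).
  by have := lratio_mean_same_snd_le G P_ge0; rewrite -/pU -/pV -/r -/mu; case: ifP => _; lra.
- rewrite (iid_mean2_coord22 pU_sum1 pV_sum1 (fun u u' v v' => r u v * r u' v')
    (m1_neq _ jj') (m2_neq _ kk')) lratio_mean_indep // -/mu.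
  by case: ifP => _; lra.
Qed.

Lemma Rsum_mark_pair_bound (x : R) (jk : 'I_L1 * 'I_L2) :
  \big[Rplus/0]_(jk' : 'I_L1 * 'I_L2)
   ((if jk == jk' then x else 0) + (if jk.1 == jk'.1 then mu else 0) +
    (if jk.2 == jk'.2 then mu else 0) + mu * mu)
  = x + INR L2 * mu + INR L1 * mu + INR L1 * INR L2 * (mu * mu).
Proof.
rewrite !big_split /= Rsum_if_eqC Rsum_const card_prod !card_ord mult_INR.
congr (_ + _ + _ + _).
  rewrite -(pair_big xpredT xpredT (fun j' k' => if jk.1 == j' then mu else 0)) /=.
  rewrite (eq_bigr (fun j' => if jk.1 == j' then INR L2 * mu else 0)) ?Rsum_if_eqC //.
  by move=> j' _; case: (jk.1 == j'); [rewrite Rsum_const card_ord | rewrite big1].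
rewrite -(pair_big xpredT xpredT (fun j' k' => if jk.2 == k' then mu else 0)) /=.
by rewrite (eq_bigr (fun _ => mu)) ?Rsum_const ?card_ord // => j' _; rewrite Rsum_if_eqC.
Qed.

Let var_bound := (c / (INR L1 * INR L2) + / INR L1 + / INR L2) / mu.

Lemma mean_mark_mass_sq_le m1 m2 :
  iid_mean2 pU pV (fun cU cV => mark_mass cU cV m1 m2 * mark_mass cU cV m1 m2) <= 1 + var_bound.
Proof.
rewrite (iid_mean2_ext pU pV (h' := fun cU cV => \big[Rplus/0]_(jk : 'I_L1 * 'I_L2)
   \big[Rplus/0]_(jk' : 'I_L1 * 'I_L2) (/ N * / N * (r (cU (m1, jk.1)) (cV (m2, jk.2)) *
     r (cU (m1, jk'.1)) (cV (m2, jk'.2))))));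
  last first.
  move=> cU cV; rewrite /mark_mass Rsum_distrl; apply: eq_bigr => jk _.
  rewrite Rsum_distrr; apply: eq_bigr => jk' _; rewrite /mark_weight.
  have mulACA (a b t : R) : t * a * (t * b) = t * t * (a * b) by ring.
  exact: mulACA.
rewrite iid_mean2_sum.
apply: Rle_trans (_ : \big[Rplus/0]_(jk : 'I_L1 * 'I_L2) (/ N * / N *
   (c * mu + INR L2 * mu + INR L1 * mu + INR L1 * INR L2 * (mu * mu))) <= _).
  apply: Rsum_le => jk _; rewrite iid_mean2_sum -(Rsum_mark_pair_bound (c * mu) jk) Rsum_distrr.
  apply: Rsum_le => jk' _; rewrite iid_mean2Z; apply: Rmult_le_compat_l; last exact: mean_mark_pair_le.
  by apply: Rmult_le_pos; apply/Rlt_le/Rinv_0_lt_compat.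
rewrite Rsum_const card_prod !card_ord mult_INR /var_bound /N.
by apply: Req_le; field; repeat split; lra.
Qed.

Lemma mean_mark_defect_le m1 m2 :
  iid_mean2 pU pV (fun cU cV => Rabs (1 - mark_mass cU cV m1 m2)) <=
  d / 2 + var_bound / (2 * d).
Proof.
apply: Rle_trans (iid_mean2_le (margA_ge0 P_ge0) (margB_ge0 P_ge0)
  (fun cU cV => Rabs_le_amgm (1 - mark_mass cU cV m1 m2) d_gt0)) _.
rewrite (iid_mean2_ext pU pV (h' := fun cU cV => d / 2 + / (2 * d) +
   (- 2 / (2 * d)) * mark_mass cU cV m1 m2 + / (2 * d) * (mark_mass cU cV m1 m2 * mark_mass cU cV m1 m2)));
  last by move=> cU cV; field; lra.
rewrite !iid_mean2D !iid_mean2Z !iid_mean2_const // mean_mark_mass.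
have := mean_mark_mass_sq_le m1 m2; have : 0 < / (2 * d) by apply: Rinv_0_lt_compat; lra.
have -> : var_bound / (2 * d) = / (2 * d) * var_bound by rewrite /Rdiv Rmult_comm.
by nra.
Qed.

Definition code_bound := packing_bound / mu + (d / 2 + var_bound / (2 * d)).

Lemma mean_avg_err_bound_le :
  iid_mean2 pU pV (fun cU cV => / (INR M1 * INR M2) * \big[Rplus/0]_(m : 'I_M1 * 'I_M2)
    (marked_err cU cV m.1 m.2 + Rabs (1 - mark_mass cU cV m.1 m.2))) <= code_bound.
Proof.
have M1_gt0 : 0 < INR M1 by apply/lt_0_INR/ltP/(leq_ltn_trans _ (ltn_ord m10)).
have M2_gt0 : 0 < INR M2 by apply/lt_0_INR/ltP/(leq_ltn_trans _ (ltn_ord m20)).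
rewrite iid_mean2Z iid_mean2_sum.
apply: Rle_trans (_ : / (INR M1 * INR M2) * \big[Rplus/0]_(m : 'I_M1 * 'I_M2) code_bound <= _).
  apply: Rmult_le_compat_l; first by apply/Rlt_le/Rinv_0_lt_compat/Rmult_lt_0_compat.
  apply: Rsum_le => m _; rewrite iid_mean2D.
  exact: Rplus_le_compat (mean_marked_err_le _ _) (mean_mark_defect_le _ _).
rewrite Rsum_const card_prod !card_ord mult_INR.
by apply: Req_le; field; lra.
Qed.

(* Random coding with expurgation: fix codebooks achieving at most the mean,
   and send each message pair through its list pair of least error. *)
Lemma is_code_bound (u0 : U) (v0 : V) (j0 : 'I_L1) (k0 : 'I_L2) : is_code W M1 M2 code_bound.
Proof.
have [cU cU_le] := iid_mean_witness (margA_ge0 P_ge0) pU_sum1 u0 mean_avg_err_bound_le.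
have [cV cV_le] := iid_mean_witness (margB_ge0 P_ge0) pV_sum1 v0 cU_le.
have [best bestP] := fin_all_exists (fun m : 'I_M1 * 'I_M2 =>
  finite_argmin (cond_err cU cV m.1 m.2) (j0, k0)).
exists (fun (m1 : 'I_M1) (m2 : 'I_M2) => f (cU (m1, (best (m1, m2)).1)) (cV (m2, (best (m1, m2)).2)));
  exists (dec1 cU), (dec2 cV).
apply: Rle_trans cV_le; rewrite /error_prob.
apply: Rmult_le_compat_l.
  apply/Rlt_le/Rinv_0_lt_compat/Rmult_lt_0_compat; apply/lt_0_INR/ltP.
  - exact: leq_ltn_trans (ltn_ord m10).
  - exact: leq_ltn_trans (ltn_ord m20).
apply: Rsum_le => -[m1 m2] _.
exact: (min_le_weighted_sum (@mark_weight_ge0 cU cV m1 m2) (cond_err_bound _ _ _ _ _)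
  (bestP (m1, m2))).
Qed.

End Coding.

(** * Smooth divergences and rates *)

Lemma lub_approx (E : R -> Prop) m e : is_lub E m -> 0 < e -> exists x, E x /\ m - e < x.
Proof.
move=> [ub least] e_gt0; apply: NNPP => no_x.
suff /least : is_upper_bound E (m - e) by lra.
by move=> x Ex; apply: Rnot_lt_le => lt_x; apply: no_x; exists x.
Qed.

Lemma glb_approx (E : R -> Prop) m e : is_glb E m -> 0 < e -> exists x, E x /\ x < m + e.
Proof.
move=> [lb greatest] e_gt0; apply: NNPP => no_x.
suff /greatest : is_lower_bound E (m + e) by lra.
by move=> x Ex; apply: Rnot_lt_le => lt_x; apply: no_x; exists x.
Qed.

Lemma Rpower2_gt0 x : 0 < Rpower 2 x.
Proof. exact: exp_pos. Qed.

Lemma Rpower2_le x y : x <= y -> Rpower 2 x <= Rpower 2 y.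
Proof. by apply: Rle_Rpower; lra. Qed.

Lemma Rpower2_log2 y : 0 < y -> Rpower 2 (log2 y) = y.
Proof. by apply: Rpower_Rlog; lra. Qed.

Lemma Rpower2_neg_log2_inv e : 0 < e -> Rpower 2 (- log2 (/ e)) = e.
Proof. by move=> e_gt0; rewrite Rpower_Ropp Rpower2_log2 ?Rinv_inv //; exact: Rinv_0_lt_compat. Qed.

Lemma Rpower2_neg2_log2_inv e : 0 < e -> Rpower 2 (- 2 * log2 (/ e)) = e * e.
Proof.
move=> e_gt0; rewrite (_ : -2 * _ = - log2 (/ e) + - log2 (/ e)); last ring.
by rewrite Rpower_plus Rpower2_neg_log2_inv.
Qed.

Lemma log2_inv_ge0 e : 0 < e < 1 -> 0 <= log2 (/ e).
Proof.
move=> [e_gt0 e_lt1]; apply: Rmult_le_pos.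
  by rewrite ln_Rinv //; have := ln_increasing _ _ e_gt0 e_lt1; rewrite ln_1; lra.
by apply/Rlt_le/Rinv_0_lt_compat; have := ln_lt_2; lra.
Qed.

Lemma inhabited_of_Rsum1 (T : finType) (p : T -> R) :
  \big[Rplus/0]_(t : T) p t = 1 -> inhabited T.
Proof.
case: (pickP (fun _ : T => true)) => [t _ | none]; first by exists.
by rewrite big_pred0 //; lra.
Qed.

Lemma packing_bound_le (X Y Z U V : finType) (W : Y -> Z -> X -> R) (pUV : U -> V -> R)
    (f : U -> V -> X) S1 S2 (M1 M2 L1 L2 : nat) i1 i2 eps0 e :
  1 - eps0 <= massP (joint_UY pUV f W) S1 -> 1 - eps0 <= massP (joint_VZ pUV f W) S2 ->
  massProd (joint_UY pUV f W) S1 <= Rpower 2 (1 - i1) ->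
  massProd (joint_VZ pUV f W) S2 <= Rpower 2 (1 - i2) ->
  INR M1 * INR L1 * Rpower 2 (1 - i1) <= e -> INR M2 * INR L2 * Rpower 2 (1 - i2) <= e ->
  packing_bound W pUV f S1 S2 M1 M2 L1 L2 <= 2 * eps0 + 2 * e.
Proof.
move=> mass1 mass2 prod1 prod2 size1 size2.
have ML_ge0 (M L : nat) : 0 <= INR M * INR L by apply: Rmult_le_pos; exact: pos_INR.
have := Rle_trans _ _ _ (Rmult_le_compat_l _ _ _ (ML_ge0 M1 L1) prod1) size1.
have := Rle_trans _ _ _ (Rmult_le_compat_l _ _ _ (ML_ge0 M2 L2) prod2) size2.
by rewrite /packing_bound; lra.
Qed.

Lemma I0_witness (A B : finType) (P : A -> B -> R) eps r : I0 P eps r ->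
  exists S, 1 - eps <= massP P S /\ massProd P S <= Rpower 2 (1 - r).
Proof.
move=> I0r; have [t [[S [S_mass ->]] t_gt]] := lub_approx I0r Rlt_0_1.
exists S; split => //.
case: (Rle_lt_dec (massProd P S) 0) => [le0 | gt0].
  by have := Rpower2_gt0 (1 - r); lra.
by rewrite -(Rpower2_log2 gt0); apply: Rpower2_le; lra.
Qed.

Lemma Iinf_witness (A B : finType) (P : A -> B -> R) eps r :
  (forall a b, 0 <= P a b) -> Iinf P eps r ->
  exists G, 1 - eps < massP P G /\ forall a b, (a, b) \in G -> 0 < P a b ->
    P a b <= Rpower 2 (r + 1) * (margA P a * margB P b).
Proof.
move=> P_ge0 Iinfr; have [t [[G [G_mass [t_ub _]]] t_lt]] := glb_approx Iinfr Rlt_0_1.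
exists G; split=> // a b abG P_gt0.
have marg_gt0 : 0 < margA P a * margB P b.
  by have := joint_le_margA P_ge0 a b; have := joint_le_margB P_ge0 a b; nra.
have ratio_gt0 : 0 < P a b / (margA P a * margB P b) by apply: Rdiv_lt_0_compat.
have : log2 (P a b / (margA P a * margB P b)) <= t by apply: t_ub; exists (a, b).
move=> /(Rle_trans _ _ (r + 1)) /(_ (ltac:(lra))) /Rpower2_le; rewrite Rpower2_log2 //.
move=> /(Rmult_le_compat_r _ _ _ (Rlt_le _ _ marg_gt0)).
by rewrite /Rdiv Rmult_assoc Rinv_l ?Rmult_1_r //; lra.
Qed.

Lemma list_size_exists e : 1 <= e ->
  exists L : nat, (0 < L)%nat /\ Rpower 2 (e - 1) <= INR L <= Rpower 2 e.
Proof.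
move=> e_ge1; set y := Rpower 2 e.
have y_ge2 : 2 <= y by rewrite /y -{1}(Rpower_1 2) //; [apply: Rpower2_le | lra].
have [up_gt up_le] := archimed y.
have up_pos : (0 < up y)%Z by apply: lt_IZR; lra.
exists (Z.to_nat (up y - 1)).
have L_eq : INR (Z.to_nat (up y - 1)) = IZR (up y) - 1.
  by rewrite INR_IZR_INZ Znat.Z2Nat.id ?minus_IZR //; lia.
have half_y : Rpower 2 (e - 1) = y / 2.
  by rewrite /Rminus Rpower_plus Rpower_Ropp Rpower_1 //; lra.
split; last by rewrite L_eq half_y; lra.
by apply/ltP/INR_lt; rewrite L_eq /=; lra.
Qed.

Lemma packing_size_le (M L : nat) i la : (1 <= M)%nat ->
  INR L <= Rpower 2 (i - log2 (INR M) - la - 1) ->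
  INR M * INR L * Rpower 2 (1 - i) <= Rpower 2 (- la).
Proof.
move=> /leP M_ge1 L_le; have M_gt0 : 0 < INR M by apply: lt_0_INR; lia.
rewrite -{1}(Rpower2_log2 M_gt0).
have -> : Rpower 2 (- la) = Rpower 2 (log2 (INR M)) *
    Rpower 2 (i - log2 (INR M) - la - 1) * Rpower 2 (1 - i).
  by rewrite -!Rpower_plus; congr Rpower; ring.
apply: Rmult_le_compat_r; first exact: Rlt_le _ _ (Rpower2_gt0 _).
by apply: Rmult_le_compat_l => //; exact: Rlt_le _ _ (Rpower2_gt0 _).
Qed.

Lemma inv_size_le (L : nat) e : Rpower 2 (e - 1) <= INR L -> / INR L <= Rpower 2 (1 - e).
Proof.
move=> L_ge; have := Rpower2_gt0 (e - 1) => pos.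
have -> : 1 - e = - (e - 1) by ring.
by rewrite Rpower_Ropp; apply: Rinv_le_contravar.
Qed.

(* List sizes L_i ~ 2^(I_0 - R_i - log(1/epst) - 1): small enough for the
   packing terms, large enough for the second-moment terms. *)
Lemma list_sizes_exist (M1 M2 : nat) i1 i2 iinf la :
  0 <= la -> (1 <= M1)%nat -> (1 <= M2)%nat ->
  log2 (INR M1) <= i1 - 5 * la - 2 -> log2 (INR M2) <= i2 - 5 * la - 2 ->
  log2 (INR M1) + log2 (INR M2) <= i1 + i2 - iinf - 11 * la - 5 ->
  exists L1 L2 : nat, [/\ (0 < L1)%nat, (0 < L2)%nat,
    INR M1 * INR L1 * Rpower 2 (1 - i1) <= Rpower 2 (- la),
    INR M2 * INR L2 * Rpower 2 (1 - i2) <= Rpower 2 (- la) &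
    Rpower 2 (iinf + 1) / (INR L1 * INR L2) + / INR L1 + / INR L2 <= 3 * Rpower 2 (- 2 * la)].
Proof.
move=> la_ge0 M1_ge1 M2_ge1 R1_le R2_le R12_le.
set e1 := i1 - log2 (INR M1) - la - 1; set e2 := i2 - log2 (INR M2) - la - 1.
have [L1 [L1_gt0 [L1_ge L1_le]]] := list_size_exists (ltac:(rewrite /e1; lra) : 1 <= e1).
have [L2 [L2_gt0 [L2_ge L2_le]]] := list_size_exists (ltac:(rewrite /e2; lra) : 1 <= e2).
exists L1, L2; split; [done | done | exact: packing_size_le | exact: packing_size_le |].
have inv1 := inv_size_le L1_ge; have inv2 := inv_size_le L2_ge.
have inv12 : / (INR L1 * INR L2) <= Rpower 2 (1 - e1) * Rpower 2 (1 - e2).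
  rewrite Rinv_mult; apply: Rmult_le_compat => //; apply/Rlt_le/Rinv_0_lt_compat.
    exact: Rlt_le_trans (Rpower2_gt0 _) L1_ge.
  exact: Rlt_le_trans (Rpower2_gt0 _) L2_ge.
have pair_term : Rpower 2 (iinf + 1) / (INR L1 * INR L2) <= Rpower 2 (- 2 * la).
  apply: Rle_trans (Rmult_le_compat_l _ _ _ (Rlt_le _ _ (Rpower2_gt0 _)) inv12) _.
  rewrite -!Rpower_plus; apply: Rpower2_le; rewrite /e1 /e2; lra.
have := Rpower2_le (ltac:(rewrite /e1; lra) : 1 - e1 <= - 2 * la).
have := Rpower2_le (ltac:(rewrite /e2; lra) : 1 - e2 <= - 2 * la).
lra.
Qed.

Lemma is_code_mono (X Y Z : finType) (W : Y -> Z -> X -> R) M1 M2 e e' :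
  is_code W M1 M2 e -> e <= e' -> is_code W M1 M2 e'.
Proof. by move=> [F [D1 [D2 err_le]]] e_le; exists F, D1, D2; lra. Qed.

Lemma code_bound_le (eps0 d eps mu T Q : R) : 0 <= eps0 -> 0 < d -> 3 / 4 < mu ->
  T <= 2 * eps0 + 2 * d -> Q <= 3 * (d * d) -> 37 * d + 8 * eps0 <= eps ->
  T / mu + (d / 2 + Q / mu / (2 * d)) <= eps.
Proof.
move=> eps0_ge0 d_gt0 mu_gt T_le Q_le eps_ge.
have inv_mu : / mu < 4 / 3.
  by rewrite (_ : 4 / 3 = / (3 / 4)); [apply: Rinv_lt_contravar; lra | field].
have inv_mu_gt0 : 0 < / mu by apply: Rinv_0_lt_compat; lra.
have -> : Q / mu / (2 * d) = Q / (2 * d) * / mu by field; lra.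
have Qd_le : Q / (2 * d) <= 3 * d / 2.
  apply: (Rmult_le_reg_r (2 * d)); first lra.
  by rewrite /Rdiv Rmult_assoc Rinv_l; lra.
rewrite /Rdiv; nra.
Qed.

Unset Implicit Arguments.

Theorem theorem4
  (X Y Z U V : finType) (W : Y -> Z -> X -> R) (pUV : U -> V -> R) (f : U -> V -> X)
  (eps0 epsinf epst eps : R) (M1 M2 : nat)
  (i0UY i0VZ iinfUV : R) :
  is_bc_channel W ->
  is_distr (fun uv : U * V => pUV uv.1 uv.2) ->
  0 <= eps0 < 1 -> 0 <= epsinf <= 1/4 -> 0 < epst < 1 -> 0 < eps ->
  37 * epst + 8 * eps0 <= eps ->
  (1 <= M1)%nat -> (1 <= M2)%nat ->
  I0 (joint_UY pUV f W) eps0 i0UY ->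
  I0 (joint_VZ pUV f W) eps0 i0VZ ->
  Iinf pUV epsinf iinfUV ->
  log2 (INR M1) <= i0UY - 5 * log2 (/ epst) - 2 ->
  log2 (INR M2) <= i0VZ - 5 * log2 (/ epst) - 2 ->
  log2 (INR M1) + log2 (INR M2) <= i0UY + i0VZ - iinfUV - 11 * log2 (/ epst) - 5 ->
  is_code W M1 M2 eps.
Proof.
move=> [W_ge0 W_sum1] [P_ge0 P_sum1] [eps0_ge0 _] [_ epsinf_le] epst_bound _ eps_ge
  M1_ge1 M2_ge1 I0UY I0VZ IinfUV R1_le R2_le R12_le.
have epst_gt0 := proj1 epst_bound.
have P_ge0' u v : 0 <= pUV u v := P_ge0 (u, v).
have P_sum1' : \big[Rplus/0]_(u : U) \big[Rplus/0]_(v : V) pUV u v = 1 by rewrite pair_big.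
have [[u0 v0]] := inhabited_of_Rsum1 P_sum1.
have [S1 [S1_mass S1_prod]] := I0_witness I0UY.
have [S2 [S2_mass S2_prod]] := I0_witness I0VZ.
have [G [G_mass G_bound]] := Iinf_witness P_ge0' IinfUV.
have [L1 [L2 [L1_gt0 L2_gt0 size1 size2 var_le]]] :=
  list_sizes_exist (log2_inv_ge0 epst_bound) M1_ge1 M2_ge1 R1_le R2_le R12_le.
apply: is_code_mono (is_code_bound f W_ge0 W_sum1 P_ge0' P_sum1' S1 S2
  (Rlt_le _ _ (Rpower2_gt0 _)) G_bound (ltac:(lra)) (Ordinal M1_ge1) (Ordinal M2_ge1)
  (lt_0_INR _ (ltP L1_gt0)) (lt_0_INR _ (ltP L2_gt0)) epst_gt0 u0 v0
  (Ordinal L1_gt0) (Ordinal L2_gt0)) _.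
rewrite /code_bound; apply: (code_bound_le eps0_ge0 epst_gt0 _ _ _ eps_ge).
- lra.
- rewrite (Rpower2_neg_log2_inv epst_gt0) in size1 size2.
  exact: packing_bound_le S1_mass S2_mass S1_prod S2_prod size1 size2.
- by rewrite (Rpower2_neg2_log2_inv epst_gt0) in var_le.
Qed.
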